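(* The subspace $K[SI[\infty]]$ of $K[\mathcal{T}[\infty]]$ spanned by sorted trees is a graded sub-$2$-associative Hopf algebra of $(K[\mathcal{T}[\infty]],\star,/,\Delta_{\mathrm s})$: it contains the one-node tree, is closed under both products $\star$ and $/$, and $\Delta_{\mathrm s}(K[SI[\infty]])\subseteq K[SI[\infty]]\otimes K[SI[\infty]]$.
   Context: $K$ is a field. A tree is a finite planar rooted tree, degree = number of non-root nodes, $\odot$ the one-node tree. An $n$--tree is a tree of degree $n$ whose non-root nodes are labelled bijectively by $\{1,\dots,n\}$; $\mathcal{T}[\infty]$ is the set of all $n$--trees. An increasing tree is an $n$--tree whose labels strictly increase along every path from the root; a sorted tree is an increasing tree in which, at every node, the labels of its children increase from left to right; $SI[\infty]$ is the set of sorted trees. Nodes $N(t)$ are ordered by depth-first post-order (subtrees left to right recursively, then the node; root maximal); write $u_1<\dots<u_n$ for non-root nodes. For a set $A$ of non-root nodes, $t_A$ is obtained by deleting non-root nodes outside $A$ (children attached in order to the parent in place of the deleted node), labels kept; $t_{[i,j]}=t_{\{u_h,\dots,u_k\}}$ if $i\le j$ and $[i,j]\cap[n]=[h,k]\ne\emptyset$, else $\odot$. Standardization $\mathrm s(t)$ relabels an $\mathbb N$-labelled tree with distinct labels by $1,\dots,|t|$ preserving relative order. $\Delta_{\mathrm s}(t)=\sum_{k=0}^n\mathrm s(t_{[1,k]})\otimes\mathrm s(t_{[k+1,n]})$. $w[m]$ adds $m$ to every label. Dot product $t\cdot w$: identify the roots, root-children of $t$ followed by those of $w$; $t/w=t\cdot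 w[|t|]$. A partition of $u$ of degree $n\ge1$ is an ordered tuple $(u_{[n_0+1,n_1]},\dots,u_{[n_{k-1}+1,n_k]})$, $0=n_0<\dots<n_k=n$; for $P=(u_1,\dots,u_k)$, $I(P,t)$ is the set of maps $f$ from blocks to $N(t)$ with $f(u_1)<\dots<f(u_k)$; $t\#_{P,f}u$ identifies the root of each $u_i$ with $f(u_i)$, the root-children of $u_i$ becoming children of $f(u_i)$ to the right of its original children, labels kept; $t* u=\sum_{P,f}t\#_{P,f}u$ ($|u|\ge1$), $t*\odot=t$; $t\star w=t* w[|t|]$. *)

From HB Require Import structures.
From mathcomp Require Import all_boot all_order all_algebra.
Set Implicit Arguments. Unset Strict Implicit. Unset Printing Implicit Defensive.
Import GRing.Theory.
Local Open Scope ring_scope.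

Inductive lnode := LNode (lab : nat) (ch : seq lnode).
(* A tree = the ordered list of the root's children (the root is unlabelled).
   The one-node tree (odot) is [::]. *)
Definition tree := seq lnode.

Fixpoint enc (t : lnode) : GenTree.tree unit :=
  let: LNode a ch := t in GenTree.Node a (map enc ch).
Fixpoint dec (g : GenTree.tree unit) : lnode :=
  match g with
  | GenTree.Leaf _ => LNode 0 [::]
  | GenTree.Node a gs => LNode a (map dec gs)
  end.
Lemma encK : cancel enc dec.
Proof.
rewrite /cancel; fix IH 1; case=> a ch /=; congr LNode; elim: ch => //= c ch IHch.
by rewrite IH IHch.
Qed.
HB.instance Definition _ := Countable.copy lnode (can_type encK).

Definition lab_of (t : lnode) := let: LNode a _ := t in a.

Fixpoint sz (t : lnode) : nat := let: LNode _ ch := t in (sumn (map sz ch)).+1.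
Definition deg (t : tree) : nat := sumn (map sz t).

Fixpoint post (t : lnode) : seq nat :=
  let: LNode a ch := t in flatten (map post ch) ++ [:: a].
Definition postF (t : tree) : seq nat := flatten (map post t).

(* n-tree: labels are a bijection onto {1,...,n} *)
Definition is_ntree (t : tree) : bool := perm_eq (postF t) (iota 1 (deg t)).

Fixpoint sorted_node (lo : nat) (t : lnode) : bool :=
  let: LNode a ch := t in
  [&& (lo < a)%N, sorted ltn (map lab_of ch) & all (sorted_node a) ch].
Definition sorted_tree (t : tree) : bool :=
  [&& is_ntree t, sorted ltn (map lab_of t) & all (sorted_node 0) t].

Fixpoint maplab (g : nat -> nat) (t : lnode) : lnode :=
  let: LNode a ch := t in LNode (g a) (map (maplab g) ch).
Definition maplabF g (t : tree) : tree := map (maplab g) t.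
Definition std (t : tree) : tree :=
  maplabF (fun a => count (fun b => (b <= a)%N) (postF t)) t.
Definition shift (m : nat) (w : tree) : tree := maplabF (addn m) w.

(** * Restriction t_A, nodes identified by their post-order position (1-based) *)
Fixpoint restr (P : pred nat) (off : nat) (t : lnode) {struct t} : seq lnode :=
  let: LNode a ch := t in
  let fix go off l := match l with
    | [::] => [::]
    | c :: l' => restr P off c ++ go (off + sz c)%N l'
    end in
  let ch' := go off ch in
  if P (off + sz t)%N then [:: LNode a ch'] else ch'.
Fixpoint restrF_from (P : pred nat) (off : nat) (f : tree) : tree :=
  match f with
  | [::] => [::]
  | c :: f' => restr P off c ++ restrF_from P (off + sz c)%N f'
  end.
Definition restrF (P : pred nat) (t : tree) : tree := restrF_from P 0 t.
(* t_[i,j] (equal to odot when [i,j] meets [n] trivially) *)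
Definition sub_int (t : tree) (i j : nat) : tree :=
  restrF (fun p => (i <= p <= j)%N) t.

(** * Grafting: g p is the forest appended as rightmost children of the node
    at post-order position p (the root has position deg t + 1). *)
Fixpoint graft (g : nat -> tree) (off : nat) (t : lnode) {struct t} : lnode :=
  let: LNode a ch := t in
  let fix go off l := match l with
    | [::] => [::]
    | c :: l' => graft g off c :: go (off + sz c)%N l'
    end in
  LNode a (go off ch ++ g (off + sz t)%N).
Fixpoint graftF_from (g : nat -> tree) (off : nat) (f : tree) : tree :=
  match f with
  | [::] => [::]
  | c :: f' => graft g off c :: graftF_from g (off + sz c)%N f'
  end.
Definition graftF (g : nat -> tree) (t : tree) : tree :=
  graftF_from g 0 t ++ g (deg t).+1.

Fixpoint subseqs (s : seq nat) : seq (seq nat) :=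
  match s with
  | [::] => [:: [::]]
  | x :: s' => [seq x :: r | r <- subseqs s'] ++ subseqs s'
  end.

(* t # _{P,f} u, the partition given by the cut points [c]
   (0 = n_0 < c_1 < ... < c_{k-1} < n_k = n) and f by the increasing
   positions [r] (of length k) in N(t) = {1, ..., deg t + 1} *)
Definition graft_part (t u : tree) (c r : seq nat) : tree :=
  let n := deg u in
  let highs := rcons c n in
  let lows := 0%N :: c in
  let blocks := [seq restrF (fun p => (lh.1 < p <= lh.2)%N) u | lh <- zip lows highs] in
  let g p := flatten [seq rb.2 | rb <- zip r blocks & rb.1 == p] in
  graftF g t.

(* t * u, as a list of trees (a formal sum with coefficients 1) *)
Definition star0 (t u : tree) : seq tree :=
  if u is [::] then [:: t] else
  flatten [seq [seq graft_part t u c r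
               | r <- subseqs (iota 1 (deg t).+1) & size r == (size c).+1]
          | c <- subseqs (iota 1 (deg u).-1)].
Definition starT (t w : tree) : seq tree := star0 t (shift (deg t) w).
Definition overT (t w : tree) : seq tree := [:: t ++ shift (deg t) w].
Definition DeltaT (t : tree) : seq (tree * tree) :=
  [seq (std (sub_int t 1 k), std (sub_int t k.+1 (deg t))) | k <- iota 0 (deg t).+1].

(** * Free vector spaces as formal sums *)
Definition fsum (K : fieldType) (X : Type) := seq (K * X).
Definition coef (K : fieldType) (X : eqType) (v : fsum K X) (x : X) : K :=
  \sum_(p <- v | p.2 == x) p.1.
Definition in_span (K : fieldType) (X : eqType) (P : pred X) (v : fsum K X) :=
  forall x, coef v x != 0 -> P x.
Definition bilin (K : fieldType) (op : tree -> tree -> seq tree)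
  (x y : fsum K tree) : fsum K tree :=
  flatten [seq flatten [seq [seq (a.1 * b.1, z) | z <- op a.2 b.2] | b <- y] | a <- x].
(* linear extension of the coproduct into K[T] (x) K[T] = K[T x T] *)
Definition coprod (K : fieldType) (x : fsum K tree) : fsum K (tree * tree) :=
  flatten [seq [seq (a.1, pr) | pr <- DeltaT a.2] | a <- x].

(* Every condition defining a sorted tree is local to a node and its children,
   so each operation is followed on a single sorted tree.  In t / w the root
   children of w[|t|] are appended after those of t and carry larger labels.
   A term of t * w[|t|] grafts, at pairwise distinct nodes of t, the
   restrictions of w[|t|] to consecutive intervals of post-order positions;
   these are sorted forests whose labels all exceed |t|, hence can be appended
   as rightmost children.  For Delta_s, restricting a sorted tree to an
   interval of positions keeps it sorted, and standardization is an increasing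
   relabelling.  Finally, a basis element with a nonzero coefficient in a
   bilinear (or linear) extension arises from basis elements with nonzero
   coefficients. *)

From HB Require Import structures.
From mathcomp Require Import all_boot all_order all_algebra zify.
Set Implicit Arguments. Unset Strict Implicit. Unset Printing Implicit Defensive.

Lemma forest_ind (P : tree -> Prop) :
  P [::] -> (forall a ch f, P ch -> P f -> P (LNode a ch :: f)) -> forall f, P f.
Proof.
move=> Pnil Pnode.
have Pcons : forall c f, P f -> P (c :: f).
  fix IH 1 => -[a ch] f Pf; apply: Pnode Pf.
  by elim: ch => // c ch Pch; apply: IH.
by elim=> // c f; apply: Pcons.
Qed.

Lemma deg_node a ch f : deg (LNode a ch :: f) = ((deg ch).+1 + deg f)%N.
Proof. by []. Qed.

Lemma deg_cat f1 f2 : deg (f1 ++ f2) = (deg f1 + deg f2)%N.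
Proof. by rewrite /deg map_cat sumn_cat. Qed.

Lemma postF_node a ch f : postF (LNode a ch :: f) = postF ch ++ a :: postF f.
Proof. by rewrite /postF /= -catA. Qed.

Lemma postF_cat f1 f2 : postF (f1 ++ f2) = postF f1 ++ postF f2.
Proof. by rewrite /postF map_cat flatten_cat. Qed.

Lemma postF_flatten (fs : seq tree) : postF (flatten fs) = flatten (map postF fs).
Proof. by elim: fs => //= f fs IH; rewrite postF_cat IH. Qed.

Lemma size_postF f : size (postF f) = deg f.
Proof.
elim/forest_ind: f => // a ch f IHch IHf.
by rewrite postF_node size_cat /= IHch IHf deg_node addSnnS.
Qed.

Lemma postF_eq_nil f : (postF f == [::]) = (f == [::]).
Proof. by case: f => // -[a ch] f; rewrite postF_node; case: (postF ch). Qed.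

Lemma lab_in_postF c f : c \in f -> lab_of c \in postF f.
Proof.
move=> cf; apply/flattenP; exists (post c); first exact: map_f.
by case: c {cf} => a ch; rewrite mem_cat mem_seq1 eqxx orbT.
Qed.

Lemma labs_in_postF f : {subset map lab_of f <= postF f}.
Proof. by move=> _ /mapP[c cf ->]; apply: lab_in_postF. Qed.

Lemma restrF_node P off a ch f :
  restrF_from P off (LNode a ch :: f) =
  (if P (off + (deg ch).+1)%N then [:: LNode a (restrF_from P off ch)]
   else restrF_from P off ch) ++ restrF_from P (off + (deg ch).+1) f.
Proof.
rewrite /=; congr (_ ++ _).
match goal with |- context [?go off ch] =>
  have -> // : forall l o, go o l = restrF_from P o l by elim=> //= c l IH o; rewrite IH end.
Qed.

Lemma graftF_node g off a ch f :
  graftF_from g off (LNode a ch :: f) =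
  LNode a (graftF_from g off ch ++ g (off + (deg ch).+1)%N)
    :: graftF_from g (off + (deg ch).+1) f.
Proof.
rewrite /=; congr (LNode a (_ ++ _) :: _).
match goal with |- context [?go off ch] =>
  have -> // : forall l o, go o l = graftF_from g o l by elim=> //= c l IH o; rewrite IH end.
Qed.

Definition sorted_forest (lo : nat) (f : tree) : bool :=
  pairwise ltn (map lab_of f) && all (sorted_node lo) f.

Lemma sorted_treeE t : sorted_tree t = is_ntree t && sorted_forest 0 t.
Proof. by rewrite /sorted_tree /sorted_forest sorted_pairwise //; apply: ltn_trans. Qed.

Lemma sorted_forest_node lo a ch f :
  sorted_forest lo (LNode a ch :: f) =
  [&& lo < a, sorted_forest a ch, all (fun c => a < lab_of c) f & sorted_forest lo f].
Proof.
rewrite /sorted_forest /= all_map sorted_pairwise; last exact: ltn_trans.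
by case: (lo < a); case: (all _ f); case: (pairwise _ (map _ f)); rewrite /= ?andbF -?andbA.
Qed.

Lemma sorted_forest_cat lo f1 f2 :
  sorted_forest lo (f1 ++ f2) =
  [&& allrel ltn (map lab_of f1) (map lab_of f2), sorted_forest lo f1 & sorted_forest lo f2].
Proof.
rewrite /sorted_forest map_cat pairwise_cat all_cat.
by case: (allrel _ _ _); case: (all _ f1); rewrite /= ?andbF -?andbA.
Qed.

Lemma sorted_forest_postF_gt lo f : sorted_forest lo f -> all (ltn lo) (postF f).
Proof.
elim/forest_ind: f lo => // a ch f IHch IHf lo.
rewrite sorted_forest_node postF_node all_cat /= => /and4P[lo_a sch _ sf].
rewrite lo_a IHf // !andbT; apply/allP => x /(allP (IHch _ sch)); exact: ltn_trans.
Qed.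

Lemma sorted_forest_roots_gt lo f : sorted_forest lo f -> all (fun c => lo < lab_of c) f.
Proof.
move=> /sorted_forest_postF_gt /allP gt; apply/allP => c cf.
exact/gt/lab_in_postF.
Qed.

Lemma sorted_forest_rebound lo m f :
  sorted_forest lo f -> all (fun c => m < lab_of c) f -> sorted_forest m f.
Proof.
move=> /andP[pf /allP sf] /allP mf; rewrite /sorted_forest pf; apply/allP => -[a ch] c_in.
by have /= /andP[_ ->] := sf _ c_in; rewrite andbT (mf _ c_in).
Qed.

Lemma sorted_forest_le lo lo' f : lo' <= lo -> sorted_forest lo f -> sorted_forest lo' f.
Proof.
move=> lo'_lo sf; apply: sorted_forest_rebound (sf) _.
by apply: sub_all (sorted_forest_roots_gt sf) => c; apply: leq_ltn_trans lo'_lo.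
Qed.

Lemma allrel_labs_lt N f1 f2 : all (fun x => x <= N) (postF f1) -> sorted_forest N f2 ->
  allrel ltn (map lab_of f1) (map lab_of f2).
Proof.
move=> /allP f1_N /sorted_forest_roots_gt /allP f2_N.
apply/allrelP => x y /labs_in_postF /f1_N x_N /mapP[c /f2_N N_c ->].
exact: leq_ltn_trans x_N N_c.
Qed.

Definition select_pos (P : pred nat) (off : nat) (s : seq nat) : seq nat :=
  [seq x.1 | x <- zip s (iota off.+1 (size s)) & P x.2].

Lemma select_pos_cons P off x s :
  select_pos P off (x :: s) = (if P off.+1 then [:: x] else [::]) ++ select_pos P off.+1 s.
Proof. by rewrite /select_pos /=; case: (P _). Qed.

Lemma select_pos_cat P off s1 s2 :
  select_pos P off (s1 ++ s2) = select_pos P off s1 ++ select_pos P (off + size s1) s2.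
Proof.
by rewrite /select_pos size_cat iotaD zip_cat ?size_iota // filter_cat map_cat addSn.
Qed.

Lemma select_pos_subseq P off s : subseq (select_pos P off s) s.
Proof.
rewrite /select_pos -[s in subseq _ s](@unzip1_zip _ _ s (iota off.+1 (size s))) ?size_iota //.
exact/map_subseq/filter_subseq.
Qed.

Lemma select_pos_eq_nil P off s :
  (select_pos P off s == [::]) = ~~ has P (iota off.+1 (size s)).
Proof.
rewrite /select_pos -size_eq0 size_map size_filter eqn0Ngt -has_count.
by rewrite -[X in has P X](@unzip2_zip _ _ s) ?size_iota // has_map.
Qed.

Lemma postF_restrF P off f : postF (restrF_from P off f) = select_pos P off (postF f).
Proof.
elim/forest_ind: f off => // a ch f IHch IHf off.
rewrite restrF_node postF_node !postF_cat select_pos_cat select_pos_cons size_postF.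
rewrite IHf addnS; case: (P _) => /=; last by rewrite IHch.
by rewrite postF_node IHch -catA.
Qed.

Lemma restrF_eq_nil P off f :
  (restrF_from P off f == [::]) = ~~ has P (iota off.+1 (deg f)).
Proof. by rewrite -postF_eq_nil postF_restrF select_pos_eq_nil size_postF. Qed.

Lemma restrF_uniq P off f : uniq (postF f) -> uniq (postF (restrF_from P off f)).
Proof. by rewrite postF_restrF; apply/subseq_uniq/select_pos_subseq. Qed.

Lemma lab_restrF_gt P off lo m f :
  sorted_forest lo f -> all (fun c => m < lab_of c) f ->
  all (fun c => m < lab_of c) (restrF_from P off f).
Proof.
move=> sf mf; have /allP gt := sorted_forest_postF_gt (sorted_forest_rebound sf mf).
apply/allP => c /lab_in_postF; rewrite postF_restrF => c_in.
exact/gt/(mem_subseq (select_pos_subseq _ _ _) c_in).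
Qed.

Definition convex (P : pred nat) := forall i j k, i <= j <= k -> P i -> P k -> P j.

Lemma sorted_forest_restrF P off lo f :
  convex P -> sorted_forest lo f -> sorted_forest lo (restrF_from P off f).
Proof.
move=> cvxP; elim/forest_ind: f lo off => // a ch f IHch IHf lo off.
rewrite sorted_forest_node restrF_node sorted_forest_cat => /and4P[lo_a sch a_f sf].
rewrite IHf // andbT; set p := (off + (deg ch).+1)%N.
case: ifP => Pp.
  rewrite sorted_forest_node lo_a IHch //= allrel1l all_map andbT.
  exact: lab_restrF_gt sf a_f.
rewrite (sorted_forest_le (ltnW lo_a)) ?IHch // andbT.
case: (restrF_from P off ch =P [::]) => [-> //|/eqP].
(* A deleted node with a surviving descendant closes the selected interval,
   so none of its right siblings survive. *)
rewrite restrF_eq_nil negbK => /hasP[q0 q0_in Pq0].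
suff /eqP -> : restrF_from P p f == [::] by rewrite allrel0r.
rewrite restrF_eq_nil; apply/hasP => -[q q_in Pq].
move: q0_in q_in; rewrite !mem_iota => /andP[_ q0_p] /andP[p_q _].
by move: Pp; rewrite (cvxP q0 p q) //; lia.
Qed.

Lemma maplabF_node g a ch f :
  maplabF g (LNode a ch :: f) = LNode (g a) (maplabF g ch) :: maplabF g f.
Proof. by []. Qed.

Lemma postF_maplabF g f : postF (maplabF g f) = map g (postF f).
Proof.
elim/forest_ind: f => // a ch f IHch IHf.
by rewrite maplabF_node !postF_node IHch IHf map_cat.
Qed.

Lemma deg_maplabF g f : deg (maplabF g f) = deg f.
Proof. by rewrite -!size_postF postF_maplabF size_map. Qed.

Lemma sorted_forest_maplabF g lo f :
  {in lo :: postF f &, {homo g : a b / a < b}} ->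
  sorted_forest lo f -> sorted_forest (g lo) (maplabF g f).
Proof.
elim/forest_ind: f lo => // a ch f IHch IHf lo.
rewrite postF_node maplabF_node !sorted_forest_node => mono /and4P[lo_a sch a_f sf].
have a_in : a \in lo :: postF ch ++ a :: postF f by rewrite !inE mem_cat inE eqxx !orbT.
have f_in : {subset postF f <= lo :: postF ch ++ a :: postF f}.
  by move=> x x_in; rewrite !inE mem_cat inE x_in !orbT.
apply/and4P; split.
- by apply: mono; rewrite ?mem_head.
- apply: IHch sch; apply: sub_in2 mono => x.
  by rewrite inE => /predU1P[->|x_in] //; rewrite !inE mem_cat x_in orbT.
- rewrite /maplabF all_map; apply/allP => -[b chb] c_f /=.
  by apply: mono; [|exact/f_in/(lab_in_postF c_f)|exact: (allP a_f _ c_f)].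
- apply: IHf sf; apply: sub_in2 mono => x.
  by rewrite inE => /predU1P[->|/f_in]; rewrite ?mem_head.
Qed.

Lemma sorted_forest_shift m f : sorted_forest 0 f -> sorted_forest m (shift m f).
Proof.
move=> sf; rewrite -[m in sorted_forest m _]addn0.
by apply: sorted_forest_maplabF sf => a b _ _; rewrite ltn_add2l.
Qed.

Lemma count_leq_lt a b s :
  a < b -> b \in s -> count (fun x => x <= a) s < count (fun x => x <= b) s.
Proof.
move=> ab; elim: s => [|x s IH] //; rewrite inE => /predU1P[<-|b_s] /=.
  rewrite leqnn (leqNgt b a) ab /= add1n ltnS.
  by apply: sub_count => y /= ya; apply: leq_trans ya (ltnW ab).
rewrite -addnS; apply: leq_add (IH b_s).
by case: (leqP x a) => //= xa; rewrite (leq_trans xa (ltnW ab)).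
Qed.

Lemma perm_ranks_iota s : uniq s ->
  perm_eq (map (fun a => count (fun b => b <= a) s) s) (iota 1 (size s)).
Proof.
move=> s_uniq; set rank := fun a => _.
have rank_inj : {in s &, injective rank}.
  move=> a b a_s b_s eq_ab; case: (ltngtP a b) => // [ab|ba].
    by have := count_leq_lt ab b_s; rewrite -/(rank a) -/(rank b) eq_ab ltnn.
  by have := count_leq_lt ba a_s; rewrite -/(rank a) -/(rank b) eq_ab ltnn.
have ranks_uniq : uniq (map rank s) by rewrite map_inj_in_uniq.
have ranks_sub : {subset map rank s <= iota 1 (size s)}.
  move=> _ /mapP[a a_s ->]; rewrite mem_iota add1n ltnS count_size andbT.
  by rewrite -has_count; apply/hasP; exists a.
apply: uniq_perm; rewrite ?iota_uniq //.
by have [] := uniq_min_size ranks_uniq ranks_sub; rewrite ?size_map ?size_iota.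
Qed.

Lemma std_sorted f : sorted_forest 0 f -> uniq (postF f) -> sorted_tree (std f).
Proof.
move=> sf f_uniq; rewrite sorted_treeE /is_ntree /std postF_maplabF deg_maplabF.
rewrite -size_postF perm_ranks_iota //=.
apply: sorted_forest_le (leq0n _) (sorted_forest_maplabF _ sf) => a b _.
by rewrite inE => /predU1P[-> //|b_in] ab; apply: count_leq_lt.
Qed.

Lemma ntree_uniq t : is_ntree t -> uniq (postF t).
Proof. by move=> /perm_uniq ->; apply: iota_uniq. Qed.

Lemma ntree_lab_le t : is_ntree t -> all (fun x => x <= deg t) (postF t).
Proof. by move=> /perm_all ->; apply/allP => x; rewrite mem_iota add1n ltnS => /andP[]. Qed.

Lemma sorted_over s w : sorted_tree s -> sorted_tree w ->
  sorted_tree (s ++ shift (deg s) w).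
Proof.
rewrite !sorted_treeE => /andP[ns ss] /andP[nw sw].
have sw' := sorted_forest_shift (deg s) sw.
apply/andP; split.
  rewrite /is_ntree postF_cat postF_maplabF deg_cat deg_maplabF iotaD perm_cat //.
  by rewrite (addnC 1) iotaDl perm_map.
by rewrite sorted_forest_cat ss (sorted_forest_le _ sw') // (allrel_labs_lt (ntree_lab_le ns)).
Qed.

Lemma convex_range i j : convex (fun p => i <= p <= j).
Proof. by move=> p q r /andP[pq qr] /andP[ip _] /andP[_ rj]; lia. Qed.

Lemma sorted_sub_int t i j : sorted_tree t -> sorted_tree (std (sub_int t i j)).
Proof.
rewrite sorted_treeE => /andP[nt st]; apply: std_sorted.
  exact: sorted_forest_restrF (@convex_range i j) st.
exact: restrF_uniq (ntree_uniq nt).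
Qed.

Lemma sorted_DeltaT t p : sorted_tree t -> p \in DeltaT t ->
  sorted_tree p.1 && sorted_tree p.2.
Proof. by move=> st /mapP[k _ ->]; rewrite !sorted_sub_int. Qed.

Lemma perm_postF f1 f2 : perm_eq f1 f2 -> perm_eq (postF f1) (postF f2).
Proof. by move=> /(perm_map post) /perm_flatten. Qed.

Lemma postF_graftF_from g off f :
  perm_eq (postF (graftF_from g off f))
          (postF f ++ postF (flatten [seq g p | p <- iota off.+1 (deg f)])).
Proof.
elim/forest_ind: f off => // a ch f IHch IHf off.
rewrite graftF_node !postF_node deg_node; set p := (off + (deg ch).+1)%N.
have -> : iota off.+1 ((deg ch).+1 + deg f) = iota off.+1 (deg ch) ++ p :: iota p.+1 (deg f).
  by rewrite iotaD -[(deg ch).+1]addn1 iotaD -catA /= /p; congr (_ ++ _ :: iota _ _); lia.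
rewrite map_cat flatten_cat /= !postF_cat.
apply/permP => x; move: (permP (IHch off) x) (permP (IHf p) x).
by rewrite !count_cat /= ?count_cat => -> ->; lia.
Qed.

Lemma postF_graftF g t :
  perm_eq (postF (graftF g t))
          (postF t ++ postF (flatten [seq g p | p <- iota 1 (deg t).+1])).
Proof.
rewrite /graftF postF_cat -addn1 iotaD map_cat flatten_cat postF_cat /= cats0 catA.
by rewrite addnC perm_cat2r postF_graftF_from.
Qed.

Definition graft_sel (r : seq nat) (B : seq tree) (p : nat) : tree :=
  flatten [seq rb.2 | rb <- zip r B & rb.1 == p].

Lemma graft_sel_cases r B p : uniq r -> size r = size B ->
  graft_sel r B p = [::] \/ graft_sel r B p \in B.
Proof.
move=> r_uniq rB; rewrite /graft_sel.
have size_sel : size [seq rb <- zip r B | rb.1 == p] <= 1.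
  rewrite size_filter -(count_map fst (pred1 p)) -/(unzip1 _) unzip1_zip ?rB //.
  by rewrite count_uniq_mem // leq_b1.
have sel_B rb : rb \in [seq rb <- zip r B | rb.1 == p] -> rb.2 \in B.
  rewrite mem_filter => /andP[_ /(map_f snd)].
  by rewrite -/(unzip2 _) unzip2_zip ?rB.
case: [seq rb <- zip r B | rb.1 == p] size_sel sel_B => [|rb [|? ?]] //= _ sel_B.
  by left.
by right; rewrite cats0; apply: sel_B; rewrite mem_head.
Qed.

Lemma perm_graft_sel r B (P : seq nat) :
  uniq P -> {subset r <= P} -> size r = size B ->
  perm_eq (flatten [seq graft_sel r B p | p <- P]) (flatten B).
Proof.
move=> P_uniq rP rB; apply/permP => x.
rewrite !count_flatten -map_comp !sumnE !big_map.
under eq_bigr => p _ do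
  rewrite /= /graft_sel count_flatten sumnE !big_map big_filter big_mkcond.
rewrite exchange_big /= -[B in RHS](@unzip2_zip _ _ r) ?rB // big_map.
apply: eq_big_seq => -[i b] /(map_f fst); rewrite -/(unzip1 _) unzip1_zip ?rB // => i_r.
rewrite (bigD1_seq i (rP _ i_r) P_uniq) /= eqxx big1 ?addn0 // => j.
by rewrite eq_sym => /negbTE ->.
Qed.

Lemma select_pos_id P off s : all P (iota off.+1 (size s)) -> select_pos P off s = s.
Proof.
rewrite -[iota _ _](@unzip2_zip _ _ s) ?size_iota // all_map => all_P.
by rewrite /select_pos (all_filterP all_P) -/(unzip1 _) unzip1_zip ?size_iota.
Qed.

Lemma perm_select_pos_ranges l m h off s : l <= m -> m <= h ->
  perm_eq (select_pos (fun p => l < p <= m) off s ++ select_pos (fun p => m < p <= h) off s)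
          (select_pos (fun p => l < p <= h) off s).
Proof.
move=> lm mh; apply/permP => a; rewrite count_cat /select_pos !count_map !count_filter.
elim: (zip _ _) => //= -[x q] z IH; rewrite -IH /=.
case: (a x); rewrite /= ?andbF //.
by case: (ltnP l q); case: (leqP q m); case: (leqP q h); case: (ltnP m q) => /=; lia.
Qed.

Definition blocks (u : tree) (c : seq nat) : seq tree :=
  [seq restrF (fun p => lh.1 < p <= lh.2) u | lh <- zip (0 :: c) (rcons c (deg u))].

Lemma perm_blocks u c : path ltn 0 c -> all (fun x => x <= deg u) c ->
  perm_eq (postF (flatten (blocks u c))) (postF u).
Proof.
move=> c_path c_le; rewrite postF_flatten -map_comp.
under eq_map => lh do rewrite /= /restrF postF_restrF.
rewrite -[X in perm_eq _ X](@select_pos_id (fun p => 0 < p <= deg u) 0); last first.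
  by apply/allP => p; rewrite size_postF mem_iota add1n ltnS.
move: (leq0n (deg u)) c_path c_le; set s := postF u; set h := deg u.
suff gen l : l <= h -> path ltn l c -> all (fun x => x <= h) c ->
  perm_eq (flatten [seq select_pos (fun p => lh.1 < p <= lh.2) 0 s | lh <- zip (l :: c) (rcons c h)])
          (select_pos (fun p => l < p <= h) 0 s) by apply: gen.
elim: c l => [|c1 c IH] l l_h /=; first by rewrite cats0.
move=> /andP[l_c1 c_path] /andP[c1_h c_h].
apply: perm_trans (perm_select_pos_ranges _ _ (ltnW l_c1) c1_h).
by rewrite perm_cat2l IH.
Qed.

Lemma labs_graftF_from g off f : map lab_of (graftF_from g off f) = map lab_of f.
Proof. by elim/forest_ind: f off => // a ch f _ IHf off; rewrite graftF_node /= IHf. Qed.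

Lemma all_labs_graftF_from (P : pred nat) g off f :
  all (fun c => P (lab_of c)) (graftF_from g off f) = all (fun c => P (lab_of c)) f.
Proof. by elim/forest_ind: f off => // a ch f _ IHf off; rewrite graftF_node /= IHf. Qed.

Lemma sorted_forest_graftF_from N g lo off f :
  (forall p, sorted_forest N (g p)) -> all (fun x => x <= N) (postF f) ->
  sorted_forest lo f -> sorted_forest lo (graftF_from g off f).
Proof.
move=> gN; elim/forest_ind: f lo off => // a ch f IHch IHf lo off.
rewrite postF_node all_cat => /andP[ch_N /andP[a_N f_N]].
rewrite graftF_node !sorted_forest_node all_labs_graftF_from => /and4P[lo_a sch -> sf].
rewrite lo_a IHf // sorted_forest_cat IHch // (sorted_forest_le a_N) // !andbT.
by rewrite labs_graftF_from (allrel_labs_lt ch_N).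
Qed.

Lemma sorted_forest_graftF N g t :
  (forall p, sorted_forest N (g p)) -> all (fun x => x <= N) (postF t) ->
  sorted_forest 0 t -> sorted_forest 0 (graftF g t).
Proof.
move=> gN t_N st; rewrite /graftF sorted_forest_cat (sorted_forest_graftF_from _ gN) //.
by rewrite (sorted_forest_le (leq0n N)) // labs_graftF_from (allrel_labs_lt t_N).
Qed.

Lemma sorted_graft_part s u c r :
  sorted_tree s -> sorted_forest (deg s) u -> perm_eq (postF u) (iota (deg s).+1 (deg u)) ->
  path ltn 0 c -> all (fun x => x <= deg u) c ->
  uniq r -> {subset r <= iota 1 (deg s).+1} -> size r = (size c).+1 ->
  sorted_tree (graft_part s u c r).
Proof.
rewrite sorted_treeE => /andP[ns ss] su pu c_path c_le r_uniq r_pos r_size.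
have -> : graft_part s u c r = graftF (graft_sel r (blocks u c)) s by [].
have B_size : size r = size (blocks u c) by rewrite size_map size_zip size_rcons minnn.
have sB p : sorted_forest (deg s) (graft_sel r (blocks u c) p).
  have [-> //|/mapP[lh _ ->]] := graft_sel_cases p r_uniq B_size.
  exact: sorted_forest_restrF (@convex_range lh.1.+1 lh.2) su.
have perm_post : perm_eq (postF (graftF (graft_sel r (blocks u c)) s))
                         (iota 1 (deg s + deg u)).
  apply: perm_trans (postF_graftF _ _) _; rewrite iotaD add1n; apply: perm_cat ns _.
  apply: perm_trans (perm_postF (perm_graft_sel (iota_uniq _ _) r_pos B_size)) _.
  exact: perm_trans (perm_blocks c_path c_le) pu.
rewrite sorted_treeE (sorted_forest_graftF sB (ntree_lab_le ns) ss) andbT.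
by rewrite /is_ntree -size_postF (perm_size perm_post) size_iota.
Qed.

Lemma mem_subseqs x s : x \in subseqs s -> subseq x s.
Proof.
elim: s x => [|a s IH] x /=; first by rewrite inE => /eqP ->.
rewrite mem_cat => /orP[/mapP[y /IH ys ->]|/IH xs] /=; first by rewrite eqxx.
exact: subseq_trans xs (subseq_cons _ _).
Qed.

Lemma sorted_starT s w z : sorted_tree s -> sorted_tree w -> z \in starT s w -> sorted_tree z.
Proof.
rewrite /starT /star0 (sorted_treeE w) => ss /andP[nw sw].
have su := sorted_forest_shift (deg s) sw.
have pu : perm_eq (postF (shift (deg s) w)) (iota (deg s).+1 (deg (shift (deg s) w))).
  by rewrite postF_maplabF deg_maplabF -addn1 iotaDl perm_map.
case: (shift (deg s) w) su pu => [|x l] su pu; first by rewrite inE => /eqP ->.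
move=> /flattenP[_ /mapP[c /mem_subseqs c_sub ->]] /mapP[r].
rewrite mem_filter => /andP[/eqP r_size /mem_subseqs r_sub] ->.
apply: sorted_graft_part; rewrite ?r_size //.
- have : subseq (0 :: c) (iota 0 (deg (x :: l)).-1.+1) by [].
  by move/(subseq_sorted ltn_trans); apply; apply: iota_ltn_sorted.
- by apply/allP => y /(mem_subseq c_sub); rewrite mem_iota; lia.
- exact: subseq_uniq r_sub (iota_uniq _ _).
- exact: mem_subseq.
Qed.

Section FormalSums.
Import GRing.Theory.
Local Open Scope ring_scope.
Variable K : fieldType.

Lemma coef_flatten (X : eqType) (vs : seq (fsum K X)) x :
  coef (flatten vs) x = \sum_(v <- vs) coef v x.
Proof. by rewrite /coef big_flatten. Qed.

Lemma coef_const (X : eqType) (c : K) (l : seq X) x :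
  coef [seq (c, z) | z <- l] x = c *+ count_mem x l.
Proof.
elim: l => [|z l IH]; first by rewrite /coef big_nil.
rewrite /coef big_cons /= -/(coef _ _) IH eq_sym.
by case: (x == z) => //=; rewrite mulrS.
Qed.

Lemma sum_neq0_exists (I : eqType) (r : seq I) (F : I -> K) :
  \sum_(i <- r) F i != 0 -> exists i, F i != 0.
Proof.
move=> nz; case: (boolP (has (fun i => F i != 0) r)) => [/hasP[i _ Fi]|/hasPn F0].
  by exists i.
by move: nz; rewrite big1_seq ?eqxx // => i /andP[_ /F0]; rewrite negbK => /eqP.
Qed.

(* Regrouping by basis element is needed: distinct summands of [v] may cancel. *)
Lemma sum_coefE (X : eqType) (v : fsum K X) (G : X -> K) :
  \sum_(a <- v) a.1 * G a.2 = \sum_(s <- undup (map snd v)) coef v s * G s.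
Proof.
symmetry.
transitivity (\sum_(s <- undup (map snd v)) \sum_(a <- v) (if a.2 == s then a.1 * G a.2 else 0)).
  apply: eq_bigr => s _; rewrite /coef mulr_suml big_mkcond /=.
  by apply: eq_bigr => a _; case: eqP => // ->.
rewrite exchange_big /=; apply: eq_big_seq => a av.
have a_in : a.2 \in undup (map snd v) by rewrite mem_undup map_f.
rewrite (bigD1_seq _ a_in (undup_uniq _)) /= eqxx big1 ?addr0 // => s.
by rewrite eq_sym => /negbTE ->.
Qed.

Lemma sum_coef_neq0 (X : eqType) (v : fsum K X) (G : X -> K) :
  \sum_(a <- v) a.1 * G a.2 != 0 -> exists s, coef v s != 0 /\ G s != 0.
Proof.
rewrite sum_coefE => /sum_neq0_exists[s]; rewrite mulf_eq0 negb_or => /andP[].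
by exists s.
Qed.

Lemma mem_natr_count_neq0 (X : eqType) (x : X) (l : seq X) :
  (count_mem x l)%:R != 0 :> K -> x \in l.
Proof. by apply: contraR => /count_memPn ->. Qed.

Lemma in_span_bilin (op : tree -> tree -> seq tree) (P : pred tree) (x y : fsum K tree) :
  (forall s w z, P s -> P w -> z \in op s w -> P z) ->
  in_span P x -> in_span P y -> in_span P (bilin op x y).
Proof.
move=> op_P Px Py z.
have -> : coef (bilin op x y) z =
    \sum_(a <- x) a.1 * \sum_(b <- y) b.1 * (count_mem z (op a.2 b.2))%:R.
  rewrite /bilin coef_flatten big_map; apply: eq_bigr => a _.
  rewrite coef_flatten big_map mulr_sumr; apply: eq_bigr => b _.
  by rewrite coef_const mulr_natr mulrnAr.
move=> /(sum_coef_neq0 (G := fun s => \sum_(b <- y) b.1 * (count_mem z (op s b.2))%:R)).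
move=> [s [/Px Ps]] /(sum_coef_neq0 (G := fun w => (count_mem z (op s w))%:R)).
by move=> [w [/Py Pw]] /mem_natr_count_neq0; apply: op_P.
Qed.

Lemma in_span_coprod (P : pred tree) (Q : pred (tree * tree)) (x : fsum K tree) :
  (forall s p, P s -> p \in DeltaT s -> Q p) ->
  in_span P x -> in_span Q (coprod x).
Proof.
move=> Delta_Q Px z.
have -> : coef (coprod x) z = \sum_(a <- x) a.1 * (count_mem z (DeltaT a.2))%:R.
  rewrite /coprod coef_flatten big_map; apply: eq_bigr => a _.
  by rewrite coef_const mulr_natr.
move=> /(sum_coef_neq0 (G := fun s => (count_mem z (DeltaT s))%:R)).
by move=> [s [/Px Ps]] /mem_natr_count_neq0; apply: Delta_Q.
Qed.

End FormalSums.

Theorem proposition4p5 (K : fieldType) :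
  sorted_tree [::] /\
  (forall x y : fsum K tree, in_span sorted_tree x -> in_span sorted_tree y ->
     in_span sorted_tree (bilin starT x y)) /\
  (forall x y : fsum K tree, in_span sorted_tree x -> in_span sorted_tree y ->
     in_span sorted_tree (bilin overT x y)) /\
  (forall x : fsum K tree, in_span sorted_tree x ->
     in_span (fun p : tree * tree => sorted_tree p.1 && sorted_tree p.2) (coprod x)).
Proof.
split; first by [].
split; first by move=> x y; apply: in_span_bilin sorted_starT.
split; last by move=> x; apply: in_span_coprod sorted_DeltaT.
move=> x y; apply: in_span_bilin => s w z ss sw; rewrite inE => /eqP ->.
exact: sorted_over.
Qed.
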